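(* Let $\mathcal A=(A,\le,\mathrm{app},\mathrm{imp},\mathsf k,\mathsf s,\Phi)$ be a full adjunction implicative ordered combinatory algebra. Define $\mathcal K_{\mathcal A\bullet}=(\Lambda,\Pi,\perp,\mathrm{app},\mathrm{push},\mathsf K,\mathsf S,\mathrm{QP})$ by $\Lambda=\Pi=A$; $s\perp\pi$ iff $s\le\pi$; $\mathrm{app}(s,t)=st$; $\mathrm{push}(s,\pi)=s\to\pi$; $\mathsf K=\mathsf k$, $\mathsf S=\mathsf s$; $\mathrm{QP}=\Phi$. Then $\mathcal K_{\mathcal A\bullet}$ is an abstract Krivine structure.
   Context: A full adjunction implicative ordered combinatory algebra is an inf-complete poset $(A,\le)$ with application $(a,b)\mapsto ab$ monotone in both arguments (associating to the left), implication $(a,b)\mapsto a\to b$ antimonotone in the first and monotone in the second argument (associating to the right), elements $\mathsf k,\mathsf s$ with $\mathsf k ab\le a$ and $\mathsf s abc\le ac(bc)$ for all $a,b,c$, such that $a\le b\to c$ implies $ab\le c$, and $ab\le c$ implies $a\le b\to c$, and a subset $\Phi\subseteq A$ closed under application containing $\mathsf s,\mathsf k$. An abstract Krivine structure consists of sets $\Lambda,\Pi$, a relation $\perp\subseteq\Lambda\times\Pi$, a map $\mathrm{push}:\Lambda\times\Pi\to\Pi$ written $t\cdot\pi$ (associating to the right), an application $\Lambda\times\Lambda\to\Lambda$ written $ts$, a subset $\mathrm{QP}\subseteq\Lambda$ closed under application, and $\mathsf K,\mathsf S\in\mathrm{QP}$ such that for all $t,s,u\in\Lambda,\pi\in\Pi$: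 $t\perp s\cdot\pi\Rightarrow ts\perp\pi$; $t\perp\pi\Rightarrow\mathsf K\perp t\cdot s\cdot\pi$; $tu(su)\perp\pi\Rightarrow\mathsf S\perp t\cdot s\cdot u\cdot\pi$. *)

Definition inf_complete {A : Type} (le : A -> A -> Prop) : Prop :=
  forall X : A -> Prop, exists m : A,
    (forall x, X x -> le m x) /\
    (forall y, (forall x, X x -> le y x) -> le y m).

Definition is_poset {A : Type} (le : A -> A -> Prop) : Prop :=
  (forall a, le a a) /\
  (forall a b c, le a b -> le b c -> le a c) /\
  (forall a b, le a b -> le b a -> a = b).

Definition full_adj_IOCA (A : Type) (le : A -> A -> Prop)
    (app imp : A -> A -> A) (k s : A) (Phi : A -> Prop) : Prop :=
  is_poset le /\ inf_complete le /\
  (forall a a' b b', le a a' -> le b b' -> le (app a b) (app a' b')) /\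
  (forall a a' b b', le a' a -> le b b' -> le (imp a b) (imp a' b')) /\
  (forall a b, le (app (app k a) b) a) /\
  (forall a b c, le (app (app (app s a) b) c) (app (app a c) (app b c))) /\
  (forall a b c, le a (imp b c) -> le (app a b) c) /\
  (forall a b c, le (app a b) c -> le a (imp b c)) /\
  (forall a b, Phi a -> Phi b -> Phi (app a b)) /\
  Phi s /\ Phi k.

Definition abstract_Krivine_structure (Lam Pi : Type)
    (perp : Lam -> Pi -> Prop) (app : Lam -> Lam -> Lam)
    (push : Lam -> Pi -> Pi) (K S : Lam) (QP : Lam -> Prop) : Prop :=
  (forall t u, QP t -> QP u -> QP (app t u)) /\
  QP K /\ QP S /\
  (forall (t s : Lam) (pi : Pi), perp t (push s pi) -> perp (app t s) pi) /\
  (forall (t s : Lam) (pi : Pi), perp t pi -> perp K (push t (push s pi))) /\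
  (forall (t s u : Lam) (pi : Pi),
      perp (app (app t u) (app s u)) pi -> perp S (push t (push s (push u pi)))).


(* Reading [t . pi] as [t -> pi] and [t ⊥ pi] as [t <= pi], each Krivine
   axiom is an instance of the adjunction [a <= b -> c  <->  ab <= c]:
   pushing arguments onto a stack is currying, and the reduction rules for
   K and S become the defining inequalities of k and s. *)

Section CurryingInOrderedApplicativeStructure.

Variables (A : Type) (le : A -> A -> Prop) (app imp : A -> A -> A).

Hypothesis le_trans : forall a b c, le a b -> le b c -> le a c.
Hypothesis curry : forall a b c, le (app a b) c -> le a (imp b c).

Lemma curry2 (f a b c : A) :
  le (app (app f a) b) c -> le f (imp a (imp b c)).
Proof. intro H. apply curry, curry, H. Qed.

Lemma curry3 (f a b c d : A) :
  le (app (app (app f a) b) c) d -> le f (imp a (imp b (imp c d))).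
Proof. intro H. apply curry, curry2, H. Qed.

Lemma k_le_push2 (k t u pi : A) :
  (forall a b, le (app (app k a) b) a) ->
  le t pi -> le k (imp t (imp u pi)).
Proof. intros Hk Htpi. apply curry2. exact (le_trans _ _ _ (Hk t u) Htpi). Qed.

Lemma s_le_push3 (s t u v pi : A) :
  (forall a b c, le (app (app (app s a) b) c) (app (app a c) (app b c))) ->
  le (app (app t v) (app u v)) pi -> le s (imp t (imp u (imp v pi))).
Proof. intros Hs H. apply curry3. exact (le_trans _ _ _ (Hs t u v) H). Qed.

End CurryingInOrderedApplicativeStructure.

Arguments k_le_push2 {A le app imp}.
Arguments s_le_push3 {A le app imp}.

Theorem mainTheorem11 (A : Type) (le : A -> A -> Prop)
    (app imp : A -> A -> A) (k s : A) (Phi : A -> Prop) :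
  full_adj_IOCA A le app imp k s Phi ->
  abstract_Krivine_structure A A le app imp k s Phi.
Proof.
intros [[_ [le_trans _]] [_ [_ [_ [Hk [Hs [uncurry [curry [Phi_app [Phi_s Phi_k]]]]]]]]]].
repeat split.
- exact Phi_app.
- exact Phi_k.
- exact Phi_s.
- exact (fun t u pi => uncurry t u pi).
- intros t u pi. exact (k_le_push2 le_trans curry k t u pi Hk).
- intros t u v pi. exact (s_le_push3 le_trans curry s t u v pi Hs).
Qed.
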